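(* Let $H$ be a locally compact abelian group with topology $\tau$, let $U\subseteq H$ be a neighbourhood of zero, and let $\mathcal{D}=\{f_i:i\in\mathbb{N}\}\subseteq C_c(H)$ be a countable uniformly bounded family of functions. Then there exist a metrisable group $(\widetilde H,\widetilde d)$ and a continuous group homomorphism $\phi:(H,\tau)\to(\widetilde H,\widetilde d)$ with dense range such that: (a) for every $f\in\mathcal{D}$ there exists $\widetilde f\in C_c(\widetilde H)$ with $f=\widetilde f\circ\phi$; (b) there exists a neighbourhood of zero $\widetilde V\subseteq\widetilde H$ such that $\phi^{-1}(\widetilde V)\subseteq U$.
   Context: $C_c(X)$ denotes the space of continuous complex-valued functions with compact support on $X$. *)

From mathcomp Require Import all_boot all_algebra all_classical all_reals all_analysis.
From mathcomp.real_closed Require Export complex.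
Export Num.Theory GRing.Theory numFieldTopology.Exports.

Set Implicit Arguments.
Unset Strict Implicit.
Unset Printing Implicit Defensive.

Local Open Scope classical_set_scope.
Local Open Scope ring_scope.

(* The complex numbers over a real type R, with their usual (norm) topology:
   (R[i])^o is the regular copy of the numClosedField R[i], which
   MathComp-Analysis equips with the pseudometric topology |x - y|. *)
Notation Cplx R := ((complex R)^o).

Definition compact_support (R : realType) (T : topologicalType)
  (f : T -> Cplx R) : Prop :=
  compact (closure [set x | f x != 0]).

Definition Cc (R : realType) (T : topologicalType) (f : T -> Cplx R) : Prop :=
  continuous f /\ compact_support f.

Definition is_metric (R : realType) (T : Type) (d : T -> T -> R) : Prop :=
  [/\ forall x y, 0 <= d x y,
      forall x y, d x y = 0 <-> x = y,
      forall x y, d x y = d y x &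
      forall x y z, d x z <= d x y + d y z].

Definition metrizes (R : realType) (T : topologicalType) (d : T -> T -> R) : Prop :=
  is_metric d /\
  forall (x : T) (A : set T),
    nbhs x A <-> exists2 e : R, 0 < e & [set y | d x y < e] `<=` A.

Definition group_hom (G K : zmodType) (phi : G -> K) : Prop :=
  forall x y, phi (x + y) = phi x + phi y.

From HB Require Import structures.
From mathcomp Require Import all_boot all_algebra all_classical all_reals all_analysis.
Import order.Order.TTheory Num.Theory GRing.Theory numFieldTopology.Exports.
Import Normc.
Local Open Scope classical_set_scope.
Local Open Scope ring_scope.
Local Open Scope complex_scope.

Set Implicit Arguments.
Unset Strict Implicit.
Unset Printing Implicit Defensive.

(* Take a continuous bump b with b(0) = 1 and |b| <= 1 that vanishes outside U
   and outside a compact set, and put g_0 = b and g_(n+1) = f_n.  The oscillation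

     rho(x) = sup_(n, z) |g_n(z + x) - g_n(z)| / (n + 1)

   is a group seminorm on H.  It is continuous at 0: each g_n has compact
   support, hence is uniformly continuous, and the uniform bound on the family
   makes the terms with large n uniformly small.  The quotient of H by the
   kernel of rho, with distance rho(x - y), is a metric abelian group onto which
   H maps continuously.  Each f_n is (n + 2)-Lipschitz for rho, hence factors
   through a compactly supported continuous function on the quotient, and since
   rho(x) >= |b(x) - b(0)| = 1 outside U, the unit ball pulls back into U. *)

Section complex_normc.
Variable R : realType.
Implicit Types (x y z : Cplx R) (r : R).

Lemma normr_normc z : `|z| = (normc z)%:C.
Proof. by case: z. Qed.

Lemma normc_ge0 z : 0 <= normc z.
Proof. by case: z => a b; exact: sqrtr_ge0. Qed.

Lemma normc_real r : normc r%:C = `|r|.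
Proof. by rewrite /normc /= expr0n /= addr0 sqrtr_sqr. Qed.

Lemma normcB_triangle x y z : normc (x - z) <= normc (x - y) + normc (y - z).
Proof. by rewrite -(subrKA y x (- z)) le_normcD. Qed.

Lemma normcB_sym x y : normc (x - y) = normc (y - x).
Proof. by rewrite -normcN opprB. Qed.

Lemma continuous_normcP (T : topologicalType) (g : T -> Cplx R) (x : T) :
  {for x, continuous g} <->
  forall e : R, 0 < e -> \forall y \near x, normc (g x - g y) < e.
Proof.
split=> [/cvgrPdist_lt gx e e0|gx].
  by near do rewrite -ltcR -normr_normc; apply: gx; rewrite ltcR.
apply/cvgrPdist_lt => -[e i]; rewrite ltcE /= => /andP[/eqP -> e0].
by near do rewrite normr_normc ltcR; apply: gx.
Unshelve. all: end_near.
Qed.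

Lemma continuous_realC (T : topologicalType) (f : T -> R) :
  continuous f -> continuous (fun t => (f t)%:C : Cplx R).
Proof.
move=> f_cont t; apply/continuous_normcP => e e0.
have /cvgrPdist_lt/(_ e e0) := f_cont t.
by apply: filterS => s; rewrite -rmorphB normc_real.
Qed.

End complex_normc.


Record group_seminorm (R : realType) (G : zmodType) := GroupSeminorm {
  seminorm :> G -> R;
  seminorm0 : seminorm 0 = 0;
  seminormN : forall x, seminorm (- x) = seminorm x;
  seminormD : forall x y, seminorm (x + y) <= seminorm x + seminorm y }.

Section seminorm_quotient.
Variables (R : realType) (G : zmodType) (rho : group_seminorm R G).
Implicit Types x y z : G.

Lemma seminorm_ge0 x : 0 <= rho x.
Proof.
have := seminormD rho x (- x); rewrite subrr seminorm0 seminormN -mulr2n.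
by rewrite pmulrn_lge0.
Qed.

Lemma seminormB_sym x y : rho (x - y) = rho (y - x).
Proof. by rewrite -seminormN opprB. Qed.

Lemma seminormB_triangle x y z : rho (x - z) <= rho (x - y) + rho (y - z).
Proof. by rewrite -(subrKA y x (- z)) seminormD. Qed.

Lemma seminormB_congr x x' y y' : rho (x - x') = 0 -> rho (y - y') = 0 ->
  rho (x - y) = rho (x' - y').
Proof.
have le_congr a a' b b' : rho (a - a') = 0 -> rho (b - b') = 0 ->
    rho (a' - b') <= rho (a - b).
  move=> ha hb; apply: le_trans (seminormB_triangle _ a _) _.
  rewrite seminormB_sym ha add0r; apply: le_trans (seminormB_triangle _ b _) _.
  by rewrite hb addr0.
by move=> hx hy; apply/eqP; rewrite eq_le !le_congr // seminormB_sym.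
Qed.

(* The quotient by the kernel [rho x = 0] is realised as the set of canonical
   representatives picked by [xget] in each class. *)
Definition seminorm_repr x : G := xget 0 [set y | rho (x - y) = 0].

Lemma seminorm_reprP x : rho (x - seminorm_repr x) = 0.
Proof.
apply: (@xgetPex _ 0 [set y | rho (x - y) = 0]).
by exists x; rewrite /= subrr seminorm0.
Qed.

Lemma seminorm_repr_eq x y :
  rho (x - y) = 0 -> seminorm_repr x = seminorm_repr y.
Proof.
move=> hxy; congr xget; apply/seteqP; split => z /= h; rewrite -h.
  by apply: seminormB_congr; rewrite ?subrr ?seminorm0 // seminormB_sym.
by apply: seminormB_congr; rewrite ?subrr ?seminorm0.
Qed.

Lemma seminorm_reprK x : seminorm_repr (seminorm_repr x) = seminorm_repr x.
Proof. by apply: seminorm_repr_eq; rewrite seminormB_sym seminorm_reprP. Qed.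

Definition seminorm_quot : Type := {x : G | seminorm_repr x == x}.
HB.instance Definition _ := Choice.on seminorm_quot.

Definition quot_pi x : seminorm_quot :=
  exist _ (seminorm_repr x) (introT eqP (seminorm_reprK x)).

Lemma quot_pi_val (a : seminorm_quot) : quot_pi (val a) = a.
Proof. by apply: val_inj; apply/eqP; exact: (valP a). Qed.

Lemma quot_pi_eq x y : rho (x - y) = 0 -> quot_pi x = quot_pi y.
Proof. by move=> h; apply: val_inj; exact: seminorm_repr_eq. Qed.

Lemma seminorm_val_pi x : rho (val (quot_pi x) - x) = 0.
Proof. by rewrite seminormB_sym; exact: seminorm_reprP. Qed.

Lemma seminormB_eq0D x x' y y' : rho (x - x') = 0 -> rho (y - y') = 0 ->
  rho ((x + y) - (x' + y')) = 0.
Proof.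
move=> hx hy; apply/eqP; rewrite eq_le seminorm_ge0 andbT opprD addrACA.
by rewrite -[X in _ <= X](addr0 0) -{1}hx -hy seminormD.
Qed.

Definition quot_zero := quot_pi 0.
Definition quot_add (a b : seminorm_quot) := quot_pi (val a + val b).
Definition quot_opp (a : seminorm_quot) := quot_pi (- val a).

Lemma quot_addE x y : quot_add (quot_pi x) (quot_pi y) = quot_pi (x + y).
Proof. by apply: quot_pi_eq; apply: seminormB_eq0D; exact: seminorm_val_pi. Qed.

Lemma quot_oppE x : quot_opp (quot_pi x) = quot_pi (- x).
Proof. by apply: quot_pi_eq; rewrite -opprD seminormN seminorm_val_pi. Qed.

Lemma quot_addA : associative quot_add.
Proof.
move=> a b c; rewrite -[a]quot_pi_val -[b]quot_pi_val -[c]quot_pi_val.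
by rewrite !quot_addE addrA.
Qed.

Lemma quot_addC : commutative quot_add.
Proof. by move=> a b; rewrite /quot_add addrC. Qed.

Lemma quot_add0 : left_id quot_zero quot_add.
Proof. by move=> a; rewrite -[a]quot_pi_val quot_addE add0r. Qed.

Lemma quot_addN : left_inverse quot_zero quot_opp quot_add.
Proof. by move=> a; rewrite -[a]quot_pi_val quot_oppE quot_addE addNr. Qed.

HB.instance Definition _ :=
  GRing.isZmodule.Build seminorm_quot quot_addA quot_addC quot_add0 quot_addN.

Lemma quot_pi0 : quot_pi 0 = 0.
Proof. by []. Qed.

Lemma quot_piD x y : quot_pi (x + y) = quot_pi x + quot_pi y.
Proof. by rewrite -quot_addE. Qed.

Lemma quot_piN x : quot_pi (- x) = - quot_pi x.
Proof. by rewrite -quot_oppE. Qed.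

Definition quot_dist (a b : seminorm_quot) : R := rho (val a - val b).

Lemma quot_distxx a : quot_dist a a = 0.
Proof. by rewrite /quot_dist subrr seminorm0. Qed.

Lemma quot_dist_eq0 a b : quot_dist a b = 0 -> a = b.
Proof.
by move=> h; rewrite -[a]quot_pi_val -[b]quot_pi_val; apply: quot_pi_eq.
Qed.

Lemma quot_dist_sym a b : quot_dist a b = quot_dist b a.
Proof. exact: seminormB_sym. Qed.

Lemma quot_dist_triangle b a c :
  quot_dist a c <= quot_dist a b + quot_dist b c.
Proof. exact: seminormB_triangle. Qed.

HB.instance Definition _ := isMetric.Build R seminorm_quot
  quot_distxx quot_dist_eq0 quot_dist_sym quot_dist_triangle.

Lemma quot_dist_pi x y : quot_dist (quot_pi x) (quot_pi y) = rho (x - y).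
Proof. by apply: seminormB_congr; exact: seminorm_val_pi. Qed.

Lemma quot_dist_sub a b c d :
  quot_dist (a - b) (c - d) <= quot_dist a c + quot_dist b d.
Proof.
rewrite -[a]quot_pi_val -[b]quot_pi_val -[c]quot_pi_val -[d]quot_pi_val.
rewrite -!quot_piN -!quot_piD !quot_dist_pi opprD opprK addrACA.
rewrite [- val b + _]addrC; apply: le_trans (seminormD _ _ _) _.
by rewrite lerD // seminormB_sym.
Qed.

Lemma quot_sub_continuous :
  continuous (fun p : seminorm_quot * seminorm_quot => p.1 - p.2).
Proof.
move=> [a b]; apply/metricType_numDomainType.cvgrPdist_lt => e e0.
have e2 : 0 < e / 2 by rewrite divr_gt0.
exists (ball a (e / 2), ball b (e / 2)); first by split; exact: nbhsx_ballx.
move=> [c d] []; rewrite !ballEmdist /= => ac bd.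
by apply: le_lt_trans (quot_dist_sub a b c d) _; rewrite [e]splitr ltrD.
Qed.

HB.instance Definition _ := PreTopologicalNmodule_isTopologicalZmodule.Build
  seminorm_quot quot_sub_continuous.

Lemma quot_metrizes : metrizes quot_dist.
Proof.
split; first split.
- by move=> a b; exact: seminorm_ge0.
- by move=> a b; split=> [|->]; [exact: quot_dist_eq0 | exact: quot_distxx].
- exact: quot_dist_sym.
- by move=> a b c; exact: quot_dist_triangle.
move=> a A; rewrite -metricType_numDomainType.filter_from_mdist_nbhs.
by split=> -[e e0 aeA]; exists e.
Qed.

Lemma quot_pi_dense : dense (range quot_pi).
Proof.
move=> O [a Oa] _; exists a; split=> //.
by exists (val a); rewrite ?quot_pi_val.
Qed.

End seminorm_quotient.

Arguments quot_dist {R G} rho : simpl never.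

Lemma near_subl (H : topologicalZmodType) (x : H) (P : set H) :
  (\forall h \near 0, P h) -> \forall y \near x, P (x - y).
Proof.
rewrite -(subrr x); apply: (@continuous_comp _ _ _ (fun y => (x, y))
  (fun p : H * H => p.1 - p.2)); last exact: sub_continuous.
by apply: cvg_pair; [exact: cvg_cst | exact: cvg_id].
Qed.

Section seminorm_quotient_topology.
Variables (R : realType) (H : topologicalZmodType) (rho : group_seminorm R H).
Hypothesis rho_cvg0 :
  forall e : R, 0 < e -> \forall h \near (0 : H), rho h < e.

Lemma quot_pi_continuous : continuous (quot_pi rho).
Proof.
move=> x; apply/metricType_numDomainType.cvgrPdist_lt => e e0.
by apply: filterS (near_subl x (rho_cvg0 e0)) => y; rewrite /= -quot_dist_pi.
Qed.

Variables (g : H -> Cplx R) (C : R).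
Hypotheses (C_gt0 : 0 < C)
  (g_lipschitz : forall u v, normc (g u - g v) <= C * rho (u - v)).

Definition quot_lift (a : seminorm_quot rho) : Cplx R := g (val a).

Lemma quot_lift_pi : quot_lift \o quot_pi rho = g.
Proof.
apply/funext => x /=; apply/eqP; rewrite -subr_eq0; apply/eqP/eq0_normc.
apply/eqP; rewrite eq_le normc_ge0 andbT; apply: le_trans (g_lipschitz _ _) _.
by rewrite seminorm_val_pi mulr0.
Qed.

Lemma quot_lift_continuous : continuous quot_lift.
Proof.
move=> a; apply/continuous_normcP => e e0.
have eC : 0 < e / C by rewrite divr_gt0.
near=> b; apply: le_lt_trans (g_lipschitz _ _) _.
rewrite -ltr_pdivlMl // mulrC; near: b.
by apply: (metricType_numDomainType.cvgr_dist_lt (@cvg_id _ (nbhs a))).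
Unshelve. all: end_near.
Qed.

Lemma quot_lift_Cc : compact_support g -> Cc quot_lift.
Proof.
move=> g_supp; split; first exact: quot_lift_continuous.
have img_compact := continuous_compact
  (continuous_subspaceT quot_pi_continuous) g_supp.
apply: (subclosed_compact _ img_compact); first exact: closed_closure.
rewrite [X in _ `<=` X](closure_id _).1; last first.
  exact: compact_closed (@metric_hausdorff R _) img_compact.
apply: closureS => a /= ga; exists (val a); last exact: quot_pi_val.
exact: subset_closure.
Qed.

End seminorm_quotient_topology.

Arguments quot_lift {R H} rho g.

Lemma compact_support_unif_continuous (R : realType) (H : topologicalZmodType)
    (g : H -> Cplx R) (K : set H) :
  continuous g -> compact K -> (forall z, ~ K z -> g z = 0) ->
  forall e : R, 0 < e ->
  \forall h \near (0 : H), forall z, normc (g (z + h) - g z) < e.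
Proof.
move=> g_cont K_compact g_off e e0; have e2 : 0 < e / 2 by rewrite divr_gt0.
have onK :
    \forall h \near (0 : H), forall z, K z -> normc (g (z + h) - g z) < e.
  apply: (proj1 (compact_near_coveringP K) K_compact H (nbhs 0)
    (fun h z => normc (g (z + h) - g z) < e)) => z Kz.
  have gz : \forall y \near z, normc (g z - g y) < e / 2.
    by have /continuous_normcP := g_cont z; apply.
  have gz0 : nbhs (z + 0) [set y | normc (g z - g y) < e / 2].
    by rewrite addr0.
  have [[A B] /= [nA nB] AB] := @add_continuous H (z, 0) _ gz0.
  exists (A `&` [set y | normc (g z - g y) < e / 2], B).
    by split => //; exact: filterI.
  move=> [y h] [[Ay gy] Bh] /=; have /= gyh := AB (y, h) (conj Ay Bh).
  apply: le_lt_trans (normcB_triangle _ (g z) _) _.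
  by rewrite [e]splitr ltrD // normcB_sym.
have onK_opp :
    \forall h \near (0 : H), forall z, K z -> normc (g (z - h) - g z) < e.
  by apply: filterS (near_subl 0 onK) => h; rewrite sub0r.
(* Off K, either g vanishes at both z and z + h, or z + h lies in K and the
   estimate at z + h with step -h applies. *)
near=> h => z.
have [Kz|nKz] := pselect (K z); first exact: (near onK h).
have [Kzh|nKzh] := pselect (K (z + h)); last by rewrite !g_off // subrr normc0.
rewrite normcB_sym -[X in g X](addrK h).
exact: (near onK_opp h).
Unshelve. all: end_near.
Qed.

Lemma Cc_unif_continuous (R : realType) (H : topologicalZmodType)
    (g : H -> Cplx R) :
  Cc g -> forall e : R, 0 < e ->
  \forall h \near (0 : H), forall z, normc (g (z + h) - g z) < e.
Proof.
move=> [g_cont g_supp].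
apply: (compact_support_unif_continuous (K := closure [set x | g x != 0]))
  g_cont g_supp _ => z z_out.
by apply/eqP/negPn/negP => gz; apply: z_out; exact: subset_closure.
Qed.

Section oscillation_seminorm.
Variables (R : realType) (H : topologicalZmodType).
Variables (g : nat -> H -> Cplx R) (B : R).
Hypothesis g_bounded : forall n x, normc (g n x) <= B.

Definition oscillation (x : H) (p : nat * H) : R :=
  normc (g p.1 (p.2 + x) - g p.1 p.2) / p.1.+1%:R.

Definition osc (x : H) : R := sup (range (oscillation x)).

Lemma normc_subg_le n x y : normc (g n x - g n y) <= B + B.
Proof. by apply: le_trans (le_normcD _ _) _; rewrite normcN lerD. Qed.

Lemma oscillation_le_normc x n z :
  oscillation x (n, z) <= normc (g n (z + x) - g n z).
Proof. by rewrite ler_pdivrMr ?ltr0Sn // ler_peMr ?normc_ge0 // ler1n. Qed.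

Lemma oscillation_le_osc x n z : oscillation x (n, z) <= osc x.
Proof.
apply: ub_le_sup; last by exists (n, z).
exists (B + B) => _ [[m y] _ <-].
exact: le_trans (oscillation_le_normc _ _ _) (normc_subg_le _ _ _).
Qed.

Lemma osc_le x r : (forall n z, oscillation x (n, z) <= r) -> osc x <= r.
Proof.
move=> le_r; apply: ge_sup; first by exists (oscillation x (0, 0)), (0, 0).
by move=> _ [[n z] _ <-]; exact: le_r.
Qed.

Lemma osc0 : osc 0 = 0.
Proof.
apply/eqP; rewrite eq_le; apply/andP; split.
  by apply: osc_le => n z; rewrite /oscillation addr0 subrr normc0 mul0r.
apply: le_trans (oscillation_le_osc 0 0 0).
by rewrite divr_ge0 ?normc_ge0.
Qed.

Lemma oscN x : osc (- x) = osc x.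
Proof.
have le_oscN y : osc (- y) <= osc y.
  apply: osc_le => n z; apply: le_trans (oscillation_le_osc y n (z - y)).
  by rewrite /oscillation /= subrK normcB_sym.
by apply/eqP; rewrite eq_le le_oscN /= -{1}[x]opprK le_oscN.
Qed.

Lemma oscD x y : osc (x + y) <= osc x + osc y.
Proof.
apply: osc_le => n z.
have := lerD (oscillation_le_osc x n (z + y)) (oscillation_le_osc y n z).
apply: le_trans.
rewrite /oscillation /= -mulrDl ler_pM2r ?invr_gt0 ?ltr0Sn //.
by rewrite [x + y]addrC addrA normcB_triangle.
Qed.

Definition osc_seminorm : group_seminorm R H := GroupSeminorm osc0 oscN oscD.

Lemma osc_lipschitz n u v : normc (g n u - g n v) <= n.+1%:R * osc (u - v).
Proof.
rewrite -ler_pdivrMl ?ltr0Sn // mulrC.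
by have := oscillation_le_osc (u - v) n v; rewrite /oscillation /= subrKC.
Qed.

Hypothesis g_unif : forall n e, 0 < e ->
  \forall h \near (0 : H), forall z, normc (g n (z + h) - g n z) < e.

Lemma osc_cvg0 e : 0 < e -> \forall h \near (0 : H), osc h < e.
Proof.
move=> e0; have e2 : 0 < e / 2 by rewrite divr_gt0.
have [N ltN] : exists N : nat, (B + B) / (e / 2) < N.+1%:R.
  by exists (Num.truncn ((B + B) / (e / 2))); exact: truncnS_gt.
have small_n : \forall h \near (0 : H),
    forall n : 'I_N, forall z, normc (g n (z + h) - g n z) < e / 2.
  by apply: filter_forall => n; exact: g_unif.
near=> h; apply: (@le_lt_trans _ _ (e / 2)).
  2: by rewrite ltr_pdivrMr // ltr_pMr // ltr1n.
have small_h : forall n : 'I_N, forall z, normc (g n (z + h) - g n z) < e / 2.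
  exact: (near small_n h).
apply: osc_le => n z; have [ltnN|leNn] := ltnP n N.
  apply/ltW/(le_lt_trans (oscillation_le_normc _ _ _)).
  exact: small_h (Ordinal ltnN) z.
rewrite /oscillation ler_pdivrMr ?ltr0Sn //.
apply: le_trans (normc_subg_le _ _ _) _.
move: ltN; rewrite ltr_pdivrMr // mulrC => /ltW/le_trans; apply.
by rewrite ler_pM2l // ler_nat.
Unshelve. all: end_near.
Qed.

End oscillation_seminorm.

Lemma compact_bump (R : realType) (T : topologicalType) (a : T) (U : set T) :
  hausdorff_space T -> locally_compact [set: T] -> nbhs a U ->
  exists (K : set T) (b : T -> Cplx R), [/\ compact K, continuous b, b a = 1,
    forall x, normc (b x) <= 1 & forall x, ~ (K `&` U) x -> b x = 0].
Proof.
move=> T_hausdorff T_lc aU; have [V aV [V_compact _]] := T_lc a I.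
have {}aV : nbhs a V by move: aV; rewrite withinET.
pose W := interior (V `&` U).
have sep : uniform_separator [set a] (~` W).
  apply: locally_compact_completely_regular => //.
    by apply: open_closedC; exact: open_interior.
  by apply; apply: nbhs_singleton; apply: nbhs_interior; exact: filterI.
pose u := Urysohn (R := R) [set a] (~` W).
have u01 x : 0 <= u x <= 1.
  have := @Urysohn_range T R [set a] (~` W) (u x) (ex_intro2 _ _ x I erefl).
  by rewrite /= in_itv.
exists V, (fun x => (1 - u x)%:C); split => //.
- apply: continuous_realC => x.
  by apply: cvgB; [exact: cvg_cst | exact: Urysohn_continuous].
- have -> : u a = 0 by apply: (Urysohn_sub0 sep); exists a.
  by rewrite subr0.
- move=> x; have /andP[u0 u1] := u01 x.
  by rewrite normc_real ger0_norm ?subr_ge0 // gerBl.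
- move=> x xW; have -> : u x = 1.
    by apply: (Urysohn_sub1 sep); exists x => // /interior_subset.
  by rewrite subrr.
Qed.

Theorem lemma5p2 (R : realType) (H : topologicalZmodType)
  (H_hausdorff : hausdorff_space H)
  (H_lc : locally_compact [set: H])
  (U : set H) (hU : nbhs (0 : H) U)
  (f : nat -> H -> Cplx R)
  (hfC : forall i, Cc (f i))
  (hfb : exists M : R, forall i x, `|f i x| <= M%:C) :
  exists (Ht : topologicalZmodType) (dt : Ht -> Ht -> R) (phi : H -> Ht),
    metrizes dt /\
    group_hom phi /\
    continuous phi /\
    dense (range phi) /\
    (forall i, exists ft : Ht -> Cplx R, Cc ft /\ f i = ft \o phi) /\
    (exists Vt : set Ht, nbhs (0 : Ht) Vt /\ phi @^-1` Vt `<=` U).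
Proof.
have [M fM] := hfb.
have [K [b [K_compact b_cont b0 b_le1 b_off]]] :=
  compact_bump R H_hausdorff H_lc hU.
pose g n := if n is n.+1 then f n else b.
have g_bounded n x : normc (g n x) <= Num.max M 1.
  case: n => [|n] /=; rewrite le_max; first by rewrite b_le1 orbT.
  by rewrite -lecR -normr_normc fM.
have g_unif n : forall e, 0 < e ->
    \forall h \near (0 : H), forall z, normc (g n (z + h) - g n z) < e.
  case: n => [|n] /=; last exact: Cc_unif_continuous (hfC n).
  apply: compact_support_unif_continuous b_cont K_compact _ => z Kz.
  by apply: b_off => -[].
pose rho := osc_seminorm g_bounded.
have rho_cvg0 : forall e, 0 < e -> \forall h \near (0 : H), rho h < e.
  exact: osc_cvg0 g_bounded g_unif.
exists (seminorm_quot rho), (quot_dist rho), (quot_pi rho).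
split; first exact: quot_metrizes.
split; first exact: quot_piD.
split; first exact: quot_pi_continuous.
split; first exact: quot_pi_dense.
split.
  move=> i.
  have f_lipschitz u v : normc (f i u - f i v) <= i.+2%:R * rho (u - v).
    exact: osc_lipschitz g_bounded i.+1 u v.
  exists (quot_lift rho (f i)).
  split; last by rewrite (quot_lift_pi f_lipschitz).
  have [_ f_supp] := hfC i.
  apply: (quot_lift_Cc rho_cvg0 (ltr0Sn _ i.+1) f_lipschitz f_supp).
exists [set a | quot_dist rho 0 a < 1].
split; first by apply/(quot_metrizes rho).2; exists 1.
move=> x /=; rewrite -quot_pi0 quot_dist_pi sub0r seminormN => rho_x.
apply: contrapT => Ux; have := osc_lipschitz g_bounded 0 x 0.
rewrite /= subr0 mul1r b0 b_off => [|[]//].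
by rewrite sub0r normcN normc1 => /le_lt_trans/(_ rho_x); rewrite ltxx.
Qed.
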